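(* Let $u\in\mathcal B$ and let $R'(u)=\sum_{n=0}^\infty R'_n[u]$ be the (formal) generating function, where $R'_n[u]=R'[u,\dots,u]$ ($n$ arguments). Then for every $v\in\mathcal B$, $R'(u)v=v+R'(u)\big(\gamma[u\,R'(u)(u)]\,v\big)+R'(u)\big(\Lambda(u\otimes v)\big)$, as an identity of formal series (i.e. comparing the terms of each homogeneous degree in $u$).
   Context: Let $\mathcal B$ be a unital $*$-algebra with star-linear maps $\gamma:\mathcal B\to\mathcal B$ and $\Lambda:\mathcal B\otimes_{alg}\mathcal B\to\mathcal B$. The linear operators $R'[u_1,\dots,u_k]$ on $\mathcal B$ ($k\ge0$) are defined recursively: $R'[\emptyset]=\mathrm{id}_{\mathcal B}$, and $R'[u_1,\dots,u_k]=\sum_{\pi\in\mathrm{Int}(k)}w(V_1)\circ\cdots\circ w(V_m)$, where $\mathrm{Int}(k)$ is the set of interval partitions of $\{1,\dots,k\}$, $V_1,\dots,V_m$ are the blocks of $\pi$ from left to right, $w(\{i\})$ is $v\mapsto\Lambda(u_i\otimes v)$, and for a block $V=\{p,\dots,q\}$ with $q>p$, $w(V)$ is left multiplication by $\gamma\big[u_p\,R'[u_{p+1},\dots,u_{q-1}](u_q)\big]$. *)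

From HB Require Import structures.
From mathcomp Require Import all_boot all_order all_algebra all_field.
Set Implicit Arguments. Unset Strict Implicit. Unset Printing Implicit Defensive.
Import Order.TTheory GRing.Theory Num.Theory.
Local Open Scope ring_scope.

(* Interval partitions of {1,...,k} are encoded as compositions of k:
   the sequence of block sizes (all positive, summing to k), blocks listed
   from left to right.  [comps_aux f k] enumerates them (f is fuel >= k). *)
Fixpoint comps_aux (f k : nat) : seq (seq nat) :=
  match f with
  | 0 => if k == 0%N then [:: [::]] else [::]
  | f'.+1 =>
      if k == 0%N then [:: [::]]
      else flatten [seq [seq j.+1 :: c | c <- comps_aux f' (k - j.+1)] | j <- iota 0 k]
  end.

Definition interval_partitions (k : nat) : seq (seq nat) := comps_aux k k.

Fixpoint blocks_of {T : Type} (sizes : seq nat) (l : seq T) : seq (seq T) :=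
  match sizes with
  | [::] => [::]
  | j :: s => take j l :: blocks_of s (drop j l)
  end.

Section Rprime.
Variable B : algType algC.
Variable gamma : B -> B.
Variable Lambda : B -> B -> B. (* Lambda x y stands for Lambda (x \otimes y) *)

(* Fuel-based definition; the fuel (size l).+1 is always sufficient. *)
Fixpoint Rp_fuel (f : nat) (l : seq B) : B -> B :=
  match f with
  | 0 => id
  | f'.+1 =>
      let w (blk : seq B) : B -> B :=
        match blk with
        | [::] => id (* never happens: blocks are nonempty *)
        | [:: x] => fun v => Lambda x v
        | x :: y :: t =>
            fun v => gamma (x * Rp_fuel f' (belast y t) (last y t)) * v
        end in
      fun v => \sum_(c <- interval_partitions (size l))
                 (foldr (fun blk g => w blk \o g) id (blocks_of c l)) v
  end.

Definition Rp (l : seq B) : B -> B := Rp_fuel (size l).+1 l.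

Definition Rpn (n : nat) (u : B) : B -> B := Rp (nseq n u).
End Rprime.

From HB Require Import structures.
From mathcomp Require Import all_boot all_order all_algebra all_field zify.
Set Implicit Arguments. Unset Strict Implicit. Unset Printing Implicit Defensive.
Import Order.TTheory GRing.Theory Num.Theory.
Local Open Scope ring_scope.

(* Splitting an interval partition of n+1 copies of u after its first block
   gives R'_{n+1}(u) = \sum_{j <= n} W_j R'_{n-j}(u), where W_j = nseq_block_op u j
   is the operator w(V) of a block of j+1 copies of u; that is,
   R'(u) = 1 + W R'(u) for the formal series W = \sum_j W_j.  Any solution of
   this left recursion also solves the right recursion R'(u) = 1 + R'(u) W
   (both describe (1 - W)^-1), and the right recursion, read in degree n, is
   the theorem. *)

Lemma exchange_big_triangle {V : nmodType} (F : nat -> nat -> V) n :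
  \sum_(j < n) \sum_(i < n - j) F i j = \sum_(i < n) \sum_(j < n - i) F i j.
Proof.
have widen (G : nat -> nat -> V) : \sum_(j < n) \sum_(i < n - j) G i j =
               \sum_(j < n) \sum_(i < n | (i + j < n)%N) G i j.
  apply: eq_bigr => j _; rewrite (big_ord_widen n (G^~ j)) ?leq_subr //.
  by apply: eq_bigl => i; rewrite ltn_subRL addnC.
rewrite widen (exchange_big_dep xpredT) // (widen (fun i j => F j i)).
by apply: eq_bigr => i _; apply: eq_bigl => j; rewrite addnC.
Qed.

Lemma recr_of_recl {V : nmodType} (W F : nat -> V -> V) :
  (forall j, {morph W j : x y / x + y}) -> (forall j, W j 0 = 0) ->
  F 0%N =1 id ->
  (forall n v, F n.+1 v = \sum_(j < n.+1) W j (F (n - j)%N v)) ->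
  forall n v, F n.+1 v = \sum_(i < n.+1) F (n - i)%N (W i v).
Proof.
move=> WD W0 F0 recl; elim/ltn_ind => n IH v.
rewrite recl big_ord_recr /= subnn F0 [RHS]big_ord_recr /= subnn F0.
congr (_ + _).
have predE (i : 'I_n) : (n - i = (n.-1 - i).+1)%N by have := ltn_ord i; lia.
transitivity (\sum_(i < n) \sum_(k < n - i) W i (F (n.-1 - i - k)%N (W k v))).
  apply: eq_bigr => i _; rewrite [in LHS]predE IH; last by have := ltn_ord i; lia.
  rewrite (big_morph (W i) (WD i) (W0 i)) -predE.
  by apply: eq_bigr => k _; congr (W _ (F _ _)); have := ltn_ord i; lia.
rewrite (exchange_big_triangle (fun k i => W i (F (n.-1 - i - k)%N (W k v)))).
apply: eq_bigr => i _; rewrite predE recl.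
by apply: eq_bigr => k _; congr (W _ (F _ _)); have := ltn_ord i; lia.
Qed.

Lemma belast_nseq (T : Type) (x : T) n : belast x (nseq n x) = nseq n x.
Proof. by elim: n => //= n ->. Qed.

Lemma last_nseq (T : Type) (x : T) n : last x (nseq n x) = x.
Proof. by elim: n. Qed.

Lemma comps_auxS f k : comps_aux f.+1 k.+1 =
  flatten [seq [seq j.+1 :: c | c <- comps_aux f (k.+1 - j.+1)] | j <- iota 0 k.+1].
Proof. by []. Qed.

Lemma comps_aux_fuelS f k : (k <= f)%N -> comps_aux f.+1 k = comps_aux f k.
Proof.
elim: f k => [|f IH] [|k] // le_kf; rewrite comps_auxS [RHS]comps_auxS.
congr flatten; apply/eq_in_map => j; rewrite mem_iota => /andP [_ lt_jk].
by rewrite IH //; lia.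
Qed.

Lemma comps_auxE f k : (k <= f)%N -> comps_aux f k = interval_partitions k.
Proof.
elim: f => [|f IH] le_kf; first by move: le_kf; rewrite leqn0 => /eqP ->.
have [lt_kf|le_fk] := ltnP k f.+1; first by rewrite comps_aux_fuelS // IH.
by have -> : k = f.+1 by apply/eqP; rewrite eqn_leq le_kf le_fk.
Qed.

Lemma all_size_blocks_of {T : Type} (c : seq nat) (l : seq T) :
  all (fun b => size b <= size l)%N (blocks_of c l).
Proof.
elim: c l => //= j c IH l; rewrite size_take geq_minr /=.
apply: sub_all (IH (drop j l)) => b /= le_b; apply: leq_trans le_b _.
by rewrite size_drop leq_subr.
Qed.

Section Rprime.
Variable B : algType algC.
Variable gamma : B -> B.
Variable Lambda : B -> B -> B.
Hypothesis LambdaD : forall x, {morph Lambda x : y z / y + z}.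

Definition block_op (f : nat) (blk : seq B) : B -> B :=
  match blk with
  | [::] => id
  | [:: x] => fun v => Lambda x v
  | x :: y :: t => fun v => gamma (x * Rp_fuel gamma Lambda f (belast y t) (last y t)) * v
  end.

Definition blocks_op (f : nat) (bs : seq (seq B)) : B -> B :=
  foldr (fun blk g => block_op f blk \o g) id bs.

Lemma blocks_op_cons f b c l v : blocks_op f (blocks_of (b :: c) l) v =
  block_op f (take b l) (blocks_op f (blocks_of c (drop b l)) v).
Proof. by []. Qed.

Lemma Rp_fuelS f l v : Rp_fuel gamma Lambda f.+1 l v =
  \sum_(c <- interval_partitions (size l)) blocks_op f (blocks_of c l) v.
Proof. by []. Qed.

Lemma Rp_fuel_eq f g l : (size l < f)%N -> (size l < g)%N ->
  Rp_fuel gamma Lambda f l =1 Rp_fuel gamma Lambda g l.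
Proof.
elim: f g l => [|f IH] [|g] l //= lt_lf lt_lg v.
rewrite -/(blocks_op f) -/(blocks_op g); apply: eq_bigr => c _.
elim: (blocks_of c l) (all_size_blocks_of c l) => //= b bs IHb /andP [le_b le_bs].
rewrite /blocks_op /= -/(blocks_op f) -/(blocks_op g) IHb //.
case: b le_b => [|x [|y t]] //= le_b.
by rewrite (IH g) // size_belast; lia.
Qed.

Lemma blocks_op_eq f g bs :
  all (fun b => (size b <= f.+1)%N && (size b <= g.+1)%N) bs ->
  blocks_op f bs =1 blocks_op g bs.
Proof.
elim: bs => //= b bs IHb /andP [/andP [le_bf le_bg] le_bs] v.
rewrite /= IHb //; case: b le_bf le_bg => [|x [|y t]] //= le_bf le_bg.
by rewrite (Rp_fuel_eq (g := g)) // size_belast; lia.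
Qed.

Definition nseq_block_op (u : B) (j : nat) (v : B) : B :=
  if j is b.+1 then gamma (u * Rpn gamma Lambda b u u) * v else Lambda u v.

Lemma nseq_block_opD u j : {morph nseq_block_op u j : x y / x + y}.
Proof. by case: j => [|j] x y /=; rewrite ?LambdaD ?mulrDr. Qed.

Lemma nseq_block_op0 u j : nseq_block_op u j 0 = 0.
Proof.
apply: (@addrI _ (nseq_block_op u j 0)).
by rewrite -nseq_block_opD !addr0.
Qed.

Lemma block_op_nseq u n j : (j <= n)%N ->
  block_op n.+1 (nseq j.+1 u) =1 nseq_block_op u j.
Proof.
case: j => [|b] // le_bn v; cbn [block_op nseq ncons iter].
rewrite belast_nseq last_nseq /nseq_block_op /Rpn /Rp size_nseq.
by rewrite (Rp_fuel_eq (f := n.+1) (g := b.+1)) // size_nseq; lia.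
Qed.

Lemma Rpn_recl u n v : Rpn gamma Lambda n.+1 u v =
  \sum_(j < n.+1) nseq_block_op u j (Rpn gamma Lambda (n - j) u v).
Proof.
rewrite -(big_mkord xpredT (fun j => nseq_block_op u j (Rpn gamma Lambda (n - j) u v))).
rewrite [LHS]/Rpn /Rp Rp_fuelS size_nseq /interval_partitions comps_auxS.
rewrite big_flatten big_map /index_iota subn0.
apply: eq_big_seq => j; rewrite mem_iota add0n => /andP [_ lt_jn].
rewrite big_map subSS comps_auxE ?leq_subr // /Rpn /Rp Rp_fuelS size_nseq.
rewrite (big_morph _ (nseq_block_opD u j) (nseq_block_op0 u j)).
apply: eq_bigr => c _; rewrite blocks_op_cons take_nseq // drop_nseq subSS.
rewrite block_op_nseq //; congr nseq_block_op.
apply: blocks_op_eq; apply: sub_all (all_size_blocks_of c (nseq (n - j) u)).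
by move=> b /=; rewrite size_nseq => le_b; apply/andP; split; lia.
Qed.

Lemma Rpn0 u : Rpn gamma Lambda 0 u =1 id.
Proof. by move=> v; rewrite /Rpn /Rp /= big_cons big_nil addr0. Qed.

Lemma Rpn_recr u n v : Rpn gamma Lambda n.+1 u v =
  \sum_(i < n.+1) Rpn gamma Lambda (n - i) u (nseq_block_op u i v).
Proof.
apply: (recr_of_recl (W := nseq_block_op u) (F := fun k => Rpn gamma Lambda k u)).
- exact: nseq_block_opD.
- exact: nseq_block_op0.
- exact: Rpn0.
- exact: Rpn_recl.
Qed.

End Rprime.

Theorem theorem3p13
  (B : algType algC)
  (star : B -> B)
  (star_add : forall x y : B, star (x + y) = star x + star y)
  (star_scale : forall (c : algC) (x : B), star (c *: x) = c^* *: star x)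
  (star_mul : forall x y : B, star (x * y) = star y * star x)
  (star_invol : forall x : B, star (star x) = x)
  (gamma : B -> B)
  (gamma_lin : linear gamma)
  (gamma_star : forall x : B, gamma (star x) = star (gamma x))
  (Lambda : B -> B -> B)
  (Lambda_lin1 : forall y : B, linear (fun x => Lambda x y))
  (Lambda_lin2 : forall x : B, linear (Lambda x))
  (Lambda_star : forall x y : B, Lambda (star x) (star y) = star (Lambda x y))
  (u v : B) (n : nat) :
  Rpn gamma Lambda n u v =
    (if n == 0%N then v else 0)
    + \sum_(b < n.-1)
        Rpn gamma Lambda (n.-2 - b) u
          (gamma (u * Rpn gamma Lambda b u u) * v)
    + (if n is m.+1 then Rpn gamma Lambda m u (Lambda u v) else 0).
Proof.
have LambdaD x : {morph Lambda x : y z / y + z}.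
  by move=> y z; have := Lambda_lin2 x 1 y z; rewrite !scale1r.
case: n => [|m]; first by rewrite Rpn0 big_ord0 !addr0.
rewrite add0r (Rpn_recr gamma LambdaD) big_ord_recl subn0 addrC; congr (_ + _).
apply: eq_bigr => i _; rewrite lift0; congr (Rpn _ _ _ _ _).
by rewrite subnS predn_sub.
Qed.
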